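(* Let $\mathbf{a}=(a_n)_{n\geq 1}$ be a strong divisibility sequence. Then for every positive integer $n$, \[\mathrm{lcm}(a_1,a_2,\dots,a_n)=\mathrm{lcm}\left\{a_1\binom{n}{1}_{\mathbf{a}},a_2\binom{n}{2}_{\mathbf{a}},\dots,a_n\binom{n}{n}_{\mathbf{a}}\right\}.\]
   Context: A strong divisibility sequence is a sequence of positive integers $(a_n)_{n\geq1}$ such that $\gcd(a_n,a_m)=a_{\gcd(n,m)}$ for all positive integers $n,m$. For integers $0\leq k\leq n$, the $\mathbf{a}$-binomial coefficient is $\binom{n}{k}_{\mathbf{a}}:=\frac{a_na_{n-1}\cdots a_{n-k+1}}{a_1a_2\cdots a_k}$ (empty products equal $1$); for a strong divisibility sequence these are positive integers. *)

From mathcomp Require Import all_boot.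
Set Implicit Arguments. Unset Strict Implicit. Unset Printing Implicit Defensive.

(* A sequence (a_n)_{n>=1} is represented as a : nat -> nat; the value a 0 is
   irrelevant and never used. *)
Definition strong_div_seq (a : nat -> nat) : Prop :=
  (forall n, 0 < n -> 0 < a n) /\
  (forall n m, 0 < n -> 0 < m -> gcdn (a n) (a m) = a (gcdn n m)).

(* a-binomial coefficient: (a_n a_{n-1} ... a_{n-k+1}) / (a_1 a_2 ... a_k).
   For a strong divisibility sequence the division is exact (paper's claim). *)
Definition abinom (a : nat -> nat) (n k : nat) : nat :=
  (\prod_(0 <= i < k) a (n - i)) %/ (\prod_(1 <= i < k.+1) a i).

Definition lcm_range (n : nat) (f : nat -> nat) : nat :=
  \big[lcmn/1]_(1 <= i < n.+1) f i.

(* Let a be a strong divisibility sequence and 1 <= k <= n.  Write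
   N = a_n a_{n-1} ... a_{n-k+1} and Q = a_1 a_2 ... a_k for the numerator and
   the denominator of the a-binomial coefficient, and L = lcm(a_1, ..., a_n).
   For a prime power q = p^e, the set of indices m > 0 with q | a_m is closed
   under multiples and under gcd, so it is either empty or the set of
   multiples of its least element r (the rank of apparition of q).  Counting
   the multiples of r in the windows [1, k] and [n-k+1, n] gives
       #Q-factors divisible by q  <=  #N-factors divisible by q,
       [q | a_k] + #N-factors     <=  [q | L] + #Q-factors,
   the second because floor(n/r) - floor((n-k)/r) <= floor(k/r) + 1, with
   equality impossible when r | k.  Since the p-adic valuation of a number is
   the number of powers p^e dividing it, summing over e yields
   v_p(Q) <= v_p(N) and v_p(a_k) + v_p(N) <= v_p(L) + v_p(Q) for every prime p,
   that is Q | N and a_k * (N / Q) | L.  As a_k | a_k * (N / Q), the two lcms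
   divide each other. *)

From mathcomp Require Import all_boot zify.

Lemma logn_count_bounded p x B : prime p -> 0 < x -> logn p x <= B ->
  logn p x = \sum_(1 <= e < B.+1) (p ^ e %| x).
Proof.
move=> p_pr x_gt0 xB.
have count_le v : \sum_(1 <= e < B.+1) (e <= v) = minn v B.
  elim: B {xB} => [|B IH]; first by rewrite big_geq // minn0.
  rewrite big_nat_recr //= IH; case: (leqP B.+1 v) => /= ?; lia.
rewrite (eq_big_nat _ _ (F2 := fun e => nat_of_bool (e <= logn p x))).
  by rewrite count_le; apply/esym/minn_idPl.
by move=> e _; rewrite pfactor_dvdn.
Qed.

Lemma logn_prod_count p (r : seq nat) (F : nat -> nat) B : prime p ->
  (forall i, i \in r -> 0 < F i) -> logn p (\prod_(i <- r) F i) <= B ->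
  logn p (\prod_(i <- r) F i) = \sum_(1 <= e < B.+1) \sum_(i <- r) (p ^ e %| F i).
Proof.
move=> p_pr; elim: r => [|x r IH] F_gt0.
  by rewrite big_nil logn1 => _; apply/esym/big1 => e _; rewrite big_nil.
have Fx_gt0 : 0 < F x by apply: F_gt0; rewrite mem_head.
have F_gt0' i : i \in r -> 0 < F i by move=> ir; apply: F_gt0; rewrite in_cons ir orbT.
have rest_gt0 : 0 < \prod_(i <- r) F i by rewrite big_seq; apply: prodn_cond_gt0.
rewrite big_cons lognM // => hB.
have hBx : logn p (F x) <= B by apply: leq_trans hB; apply: leq_addr.
have hBr : logn p (\prod_(i <- r) F i) <= B by apply: leq_trans hB; apply: leq_addl.
rewrite (logn_count_bounded _ _ B p_pr Fx_gt0 hBx) (IH F_gt0' hBr) -big_split.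
by apply: eq_bigr => e _; rewrite big_cons.
Qed.

Lemma dvdn_logn x y : 0 < x -> 0 < y ->
  (forall p, prime p -> logn p x <= logn p y) -> x %| y.
Proof.
move=> x_gt0 y_gt0 le_log; apply/dvdn_partP => // p.
rewrite mem_primes => /and3P [p_pr _ _].
by rewrite p_part pfactor_dvdn // le_log.
Qed.

Lemma count_multiples_window r n k : 0 < r -> k <= n ->
  \sum_(0 <= i < k) (r %| n - i) = n %/ r - (n - k) %/ r.
Proof.
move=> r_gt0; elim: k => [|k IH] kn; first by rewrite big_geq // subn0 subnn.
rewrite big_nat_recr //= IH; last lia.
have le_div : (n - k) %/ r <= n %/ r by apply: leq_div2r; apply: leq_subr.
move: le_div; have -> : n - k = (n - k.+1).+1 by lia.
rewrite divnS //; lia.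
Qed.

Lemma floor_window_bounds r n k : 0 < r -> k <= n ->
  k %/ r <= n %/ r - (n - k) %/ r /\
  (r %| k) + (n %/ r - (n - k) %/ r) <= 1 + k %/ r.
Proof.
move=> r_gt0 kn.
have -> : n = k + (n - k) by lia.
rewrite addKn (divnD _ _ r_gt0).
suff carry_le : (r %| k) + (r <= k %% r + (n - k) %% r) <= 1.
  by move: carry_le; move: (k %/ r) ((n - k) %/ r) => x y; lia.
have [/eqP -> | _] := boolP (r %| k); last by rewrite leq_b1.
by rewrite add0n [r <= _]leqNgt ltn_pmod.
Qed.

Lemma dvdn_lcm_range n (f : nat -> nat) m : 0 < m -> m <= n -> f m %| lcm_range n f.
Proof.
move=> m_gt0 mn; rewrite /lcm_range (bigD1_seq m) ?iota_uniq ?dvdn_lcml //.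
by rewrite mem_index_iota; lia.
Qed.

Lemma lcm_range_dvd n (f : nat -> nat) d :
  (forall m, 0 < m -> m <= n -> f m %| d) -> lcm_range n f %| d.
Proof.
move=> f_dvd; rewrite /lcm_range big_seq; elim/big_ind: _ => // [x y|m].
  by rewrite dvdn_lcm => -> ->.
by rewrite mem_index_iota => /andP [? ?]; apply: f_dvd.
Qed.

Section GcdClosedIndexSets.

Variable D : pred nat.
Hypothesis D_mul : forall m t, 0 < m -> 0 < t -> D m -> D (m * t).
Hypothesis D_gcd : forall m1 m2, 0 < m1 -> 0 < m2 -> D m1 -> D m2 -> D (gcdn m1 m2).

Lemma gcd_closed_multiples r : 0 < r -> D r ->
  (forall m, 0 < m -> D m -> r <= m) -> forall m, 0 < m -> D m = (r %| m).
Proof.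
move=> r_gt0 Dr r_min m m_gt0; apply/idP/idP => [Dm | /dvdnP [t def_m]].
  have g_gt0 : 0 < gcdn r m by rewrite gcdn_gt0 r_gt0.
  have le_r_g := r_min _ g_gt0 (D_gcd _ _ r_gt0 m_gt0 Dr Dm).
  have le_g_r : gcdn r m <= r by apply: dvdn_leq => //; apply: dvdn_gcdl.
  by apply/gcdn_idPl/eqP; rewrite eqn_leq le_g_r le_r_g.
have t_gt0 : 0 < t by move: m_gt0; rewrite def_m muln_gt0 => /andP [].
by rewrite def_m mulnC; apply: D_mul.
Qed.

Lemma gcd_closed_window_counts n k (b : bool) :
  (forall m, 0 < m -> m <= n -> D m -> b) -> 0 < k -> k <= n ->
  \sum_(1 <= i < k.+1) D i <= \sum_(0 <= i < k) D (n - i) /\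
  D k + \sum_(0 <= i < k) D (n - i) <= b + \sum_(1 <= i < k.+1) D i.
Proof.
move=> Db k_gt0 kn.
have [/hasP [m] | /hasPn D_none] := boolP (has D (iota 1 n)); last first.
  have D0 i : 0 < i -> i <= n -> D i = false.
    by move=> i_gt0 i_le; apply/negbTE/D_none; rewrite mem_iota; lia.
  rewrite !big_nat !big1 ?D0 // => i /andP [? ?]; rewrite D0 //; lia.
rewrite mem_iota => /andP [m_gt0 mn] Dm.
have -> : b by apply: (Db m) => //; lia.
have ex_pos : exists m, (0 < m) && D m by exists m; rewrite m_gt0.
have [r /andP [r_gt0 Dr] r_min] := ex_minnP ex_pos.
have DE : forall m, 0 < m -> D m = (r %| m).
  by apply: gcd_closed_multiples => // x x_gt0 Dx; apply: r_min; rewrite x_gt0.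
have [lo hi] := floor_window_bounds _ _ _ r_gt0 kn.
rewrite (DE k k_gt0) (eq_big_nat _ _ (F1 := fun i => nat_of_bool (D i))
  (F2 := fun i => nat_of_bool (r %| i))); last first.
  by move=> i /andP [i_gt0 _]; rewrite DE.
rewrite (eq_big_nat _ _ (F1 := fun i => nat_of_bool (D (n - i)))
  (F2 := fun i => nat_of_bool (r %| n - i))); last first.
  by move=> i /andP [_ ik]; rewrite DE //; lia.
rewrite -divn_count_dvd count_multiples_window //; split; lia.
Qed.

End GcdClosedIndexSets.

Section StrongDivisibilitySequence.

Variable a : nat -> nat.
Hypothesis a_pos : forall n, 0 < n -> 0 < a n.
Hypothesis a_gcd : forall n m, 0 < n -> 0 < m -> gcdn (a n) (a m) = a (gcdn n m).

Lemma dvd_term_mul d m t : 0 < m -> 0 < t -> d %| a m -> d %| a (m * t).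
Proof.
move=> m_gt0 t_gt0 /dvdn_trans; apply.
have -> : a m = gcdn (a m) (a (m * t)).
  by rewrite a_gcd ?muln_gt0 ?m_gt0 // (gcdn_idPl (dvdn_mulr t (dvdnn m))).
exact: dvdn_gcdr.
Qed.

Lemma dvd_term_gcd d m1 m2 : 0 < m1 -> 0 < m2 ->
  d %| a m1 -> d %| a m2 -> d %| a (gcdn m1 m2).
Proof. by move=> m1_gt0 m2_gt0 d1 d2; rewrite -a_gcd // dvdn_gcd d1. Qed.

Lemma lcm_range_gt0 n : 0 < lcm_range n a.
Proof.
rewrite /lcm_range big_seq; elim/big_ind: _ => // [x y|i].
  by rewrite lcmn_gt0 => -> ->.
by rewrite mem_index_iota => /andP [? _]; apply: a_pos.
Qed.

Variables n k : nat.
Hypothesis k_gt0 : 0 < k.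
Hypothesis k_le_n : k <= n.

Local Notation numer := (\prod_(0 <= i < k) a (n - i)).
Local Notation denom := (\prod_(1 <= i < k.+1) a i).
Local Notation L := (lcm_range n a).

Lemma numer_gt0 : 0 < numer.
Proof.
rewrite big_seq; apply: prodn_cond_gt0 => i.
by rewrite mem_index_iota => ?; apply: a_pos; lia.
Qed.

Lemma denom_gt0 : 0 < denom.
Proof.
rewrite big_seq; apply: prodn_cond_gt0 => i.
by rewrite mem_index_iota => ?; apply: a_pos; lia.
Qed.

Lemma prime_power_counts p e : prime p ->
  \sum_(1 <= i < k.+1) (p ^ e %| a i) <= \sum_(0 <= i < k) (p ^ e %| a (n - i)) /\
  (p ^ e %| a k) + \sum_(0 <= i < k) (p ^ e %| a (n - i)) <=
    (p ^ e %| L) + \sum_(1 <= i < k.+1) (p ^ e %| a i).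
Proof.
move=> p_pr; apply: (@gcd_closed_window_counts (fun m => p ^ e %| a m)) => //.
- by move=> m t m_gt0 t_gt0; apply: dvd_term_mul.
- by move=> m1 m2 m1_gt0 m2_gt0; apply: dvd_term_gcd.
- by move=> m m_gt0 mn /dvdn_trans; apply; apply: dvdn_lcm_range.
Qed.

(* Summing the counts over the exponents e gives the valuation bounds. *)
Lemma valuation_bounds p : prime p ->
  logn p denom <= logn p numer /\
  logn p (a k) + logn p numer <= logn p L + logn p denom.
Proof.
move=> p_pr.
set B := logn p numer + logn p denom + logn p L + logn p (a k).
have [bN bD bL bK] : [/\ logn p numer <= B, logn p denom <= B,
                         logn p L <= B & logn p (a k) <= B].
  by rewrite /B; move: (logn p numer) (logn p denom) (logn p L) (logn p (a k)) => *; split; lia.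
have numer_pos i : i \in index_iota 0 k -> 0 < a (n - i).
  by rewrite mem_index_iota => ?; apply: a_pos; lia.
have denom_pos i : i \in index_iota 1 k.+1 -> 0 < a i.
  by rewrite mem_index_iota => ?; apply: a_pos; lia.
rewrite (logn_prod_count _ _ _ B p_pr numer_pos bN).
rewrite (logn_prod_count _ _ _ B p_pr denom_pos bD).
rewrite (logn_count_bounded _ _ B p_pr (a_pos _ k_gt0) bK).
rewrite (logn_count_bounded _ _ B p_pr (lcm_range_gt0 n) bL).
split; last rewrite -!big_split /=;
  by apply: leq_sum => e _; have [] := prime_power_counts p e p_pr.
Qed.

Lemma denom_dvd_numer : denom %| numer.
Proof.
apply: dvdn_logn denom_gt0 numer_gt0 _ => p p_pr.
by have [] := valuation_bounds p p_pr.
Qed.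

Lemma term_abinom_dvd_lcm : a k * abinom a n k %| L.
Proof.
rewrite -(dvdn_pmul2r denom_gt0) -mulnA /abinom divnK; last exact: denom_dvd_numer.
apply: dvdn_logn => [||p p_pr]; rewrite ?muln_gt0 ?a_pos ?numer_gt0 ?denom_gt0
  ?lcm_range_gt0 //.
rewrite !lognM ?a_pos ?numer_gt0 ?denom_gt0 ?lcm_range_gt0 //.
by have [] := valuation_bounds p p_pr.
Qed.

End StrongDivisibilitySequence.

Theorem corollary1 (a : nat -> nat) (n : nat) :
  strong_div_seq a -> 0 < n ->
  lcm_range n a = lcm_range n (fun k => a k * abinom a n k).
Proof.
move=> [a_pos a_gcd] _; apply/eqP; rewrite eqn_dvd.
apply/andP; split; apply: lcm_range_dvd => k k_gt0 kn.
  apply: dvdn_trans (dvdn_mulr _ (dvdnn (a k))) _.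
  exact: (dvdn_lcm_range n (fun k => a k * abinom a n k) k k_gt0 kn).
exact: term_abinom_dvd_lcm.
Qed.
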